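(* Let $m\ge2$ be even and $V$ a finite-dimensional $\mathbb{K}$-vector space with ordered basis. Then there is a filtration $$\{0\}=\mathrm{HPf}^{(m,1)}(V)\subseteq\mathrm{HPf}^{(m,2)}(V)\subseteq\dots\subseteq\mathrm{HPf}^{(m,l)}(V)\subseteq\mathrm{HPf}^{(m,l+1)}(V)\subseteq\dots\subseteq\textstyle\bigwedge^mV$$ which is exhaustive: $\mathrm{HPf}^{(m,L)}(V)=\bigwedge^mV$ for all sufficiently large $L$.
   Context: Let the basis be $(e_i)_{i\in B}$, $B$ totally ordered. For $x\in\bigwedge^mV$ write $x=\sum_Ix_Ie_I$, $e_I=e_{i_1}\wedge\dots\wedge e_{i_m}$ for $I=\{i_1<\dots<i_m\}$. For $A\subseteq B$ with $|A|=mk$, $\mathrm{hpf}^{(m,k)}_A(x)=\sum\mathrm{sgn}(I_1,\dots,I_k)x_{I_1}\cdots x_{I_k}$, summed over unordered partitions of $A$ into $m$-sets $I_1,\dots,I_k$, with $\mathrm{sgn}$ the sign of the permutation of $A$ listing $I_1,\dots,I_k$ successively, each increasingly. $\mathrm{HPf}^{(m,k)}(V)$ is the set of $x\in\bigwedge^mV$ with $\mathrm{hpf}^{(m,k)}_A(x)=0$ for all $A\subseteq B$, $|A|=mk$. *)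

From HB Require Import structures.
From mathcomp Require Import all_boot all_order all_algebra.
Set Implicit Arguments. Unset Strict Implicit. Unset Printing Implicit Defensive.
Import Order.TTheory GRing.Theory Num.Theory.
Local Open Scope ring_scope.

(* V = K^n with ordered basis (e_i)_{i : 'I_n} (order of 'I_n).
   An element of /\^m V is given by its coordinates x_I in the basis e_I,
   I ranging over the m-subsets of 'I_n. *)
Definition msubset (n m : nat) := {I : {set 'I_n} | #|I| == m}.

Definition wedge (K : fieldType) (n m : nat) := {ffun msubset n m -> K}.

(* the coordinate x_I (0 if #|I| <> m, never used in that case) *)
Definition coord_wedge (K : fieldType) (n m : nat) (x : wedge K n m)
    (I : {set 'I_n}) : K :=
  oapp x 0 (insub I : option (msubset n m)).

Fixpoint ninv (n : nat) (s : seq 'I_n) : nat :=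
  match s with
  | [::] => 0%N
  | a :: s' => (count (fun b : 'I_n => b < a)%N s' + ninv s')%N
  end.

(* least element of a block (n if empty) *)
Definition bmin (n : nat) (B : {set 'I_n}) : nat := \big[minn/n]_(i in B) (i : nat).

Definition listing (n : nat) (P : {set {set 'I_n}}) : seq 'I_n :=
  flatten [seq sort (fun i j : 'I_n => (i <= j)%N) (enum B)
          | B : {set 'I_n} <- sort (fun B C => (bmin B <= bmin C)%N) (enum P)].

Definition psign (K : fieldType) (n : nat) (P : {set {set 'I_n}}) : K :=
  (-1) ^+ ninv (listing P).

Definition hpf (K : fieldType) (n m k : nat) (x : wedge K n m)
    (A : {set 'I_n}) : K :=
  \sum_(P : {set {set 'I_n}} | partition P A && [forall B in P, #|B| == m]
                                && (#|P| == k))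
     psign K P * \prod_(B in P) coord_wedge x B.

Definition HPf (K : fieldType) (n m k : nat) (x : wedge K n m) : Prop :=
  forall A : {set 'I_n}, #|A| = (m * k)%N -> hpf k x A = 0.

From HB Require Import structures.
From mathcomp Require Import all_boot all_order all_algebra.
Import Order.TTheory GRing.Theory Num.Theory.
From mathcomp Require Import zify ring.
Set Implicit Arguments. Unset Strict Implicit. Unset Printing Implicit Defensive.

(* Splitting off the block [I] that contains the least element [a0] of [A]
   expands [hpf^(m,k+1)_A(x)] as [\sum_I (+-1) x_I hpf^(m,k)_(A\I)(x)]: since the
   blocks of a listing are ordered by their least elements, [I] comes first, and
   the sign only counts the inversions between [I] and [A \ I].  Hence
   [HPf^(m,k) ⊆ HPf^(m,k+1)]; [HPf^(m,1)] is zero because [hpf^(m,1)_A(x) = x_A];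
   and [HPf^(m,L)] is everything once [mL > n], for lack of sets [A] of size [mL]. *)

Section Listing.
Variable n : nat.

Lemma ninv_cat (s t : seq 'I_n) :
  ninv (s ++ t) = ninv s + ninv t + \sum_(a <- s) count (fun b : 'I_n => b < a) t.
Proof.
elim: s => [|a s IH] /=; first by rewrite big_nil addn0.
by rewrite big_cons IH count_cat; lia.
Qed.

Lemma ninv_sorted (s : seq 'I_n) :
  sorted (fun i j : 'I_n => i <= j) s -> ninv s = 0.
Proof.
elim: s => [|a s IH] //= Hp.
rewrite IH; last exact: path_sorted Hp.
have Hall := order_path_min (fun (y x z : 'I_n) (h1 : x <= y) h2 => leq_trans h1 h2) Hp.
apply/eqP; rewrite addn0 -leqn0 leqNgt -has_count; apply/hasPn => b bs.
by rewrite -leqNgt; move/allP: Hall => /(_ b bs).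
Qed.

Lemma ninv_sort_enum (I : {set 'I_n}) :
  ninv (sort (fun i j : 'I_n => i <= j) (enum I)) = 0.
Proof. by apply/ninv_sorted/sort_sorted => i j; apply: leq_total. Qed.

Lemma bmin_le (B : {set 'I_n}) i : i \in B -> bmin B <= i.
Proof.
move=> iB; rewrite /bmin -big_filter.
have : i \in [seq j <- index_enum 'I_n | j \in B] by rewrite mem_filter iB mem_index_enum.
elim: [seq j <- index_enum 'I_n | j \in B] => [|j r IH] //=.
rewrite inE big_cons => /orP [/eqP <-|/IH h]; first by rewrite geq_minl.
by rewrite geq_min h orbT.
Qed.

Lemma leq_bmin (B : {set 'I_n}) c :
  c <= n -> (forall i, i \in B -> c <= i) -> c <= bmin B.
Proof.
move=> cn cB; apply: (big_ind (fun v => c <= v)) => // x y cx cy.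
by rewrite leq_min cx cy.
Qed.

Lemma bmin_mem (B : {set 'I_n}) : B != set0 -> exists2 b, b \in B & bmin B = b.
Proof.
move=> /set0Pn [b0 b0B].
have: (bmin B == n) || [exists b in B, bmin B == b].
  apply: (big_ind (fun v => (v == n) || [exists b in B, v == b])).
  - by rewrite eqxx.
  - by move=> x y hx hy; case: (leqP x y).
  - by move=> i iB; apply/orP; right; apply/existsP; exists i; rewrite iB eqxx.
case/orP => [/eqP h|/existsP [b /andP [bB /eqP h]]]; last by exists b.
by have := bmin_le b0B; rewrite h leqNgt ltn_ord.
Qed.

Lemma bmin_inj (P : {set {set 'I_n}}) : trivIset P -> set0 \notin P ->
  {in P &, injective (@bmin n)}.
Proof.
move=> tP s0 B C BP CP e.
have [b bB hb] := bmin_mem (memPn s0 B BP).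
have [c cC hc] := bmin_mem (memPn s0 C CP).
have ebc : b = c by apply: val_inj; rewrite /= -hb -hc e.
by rewrite -(def_pblock tP BP bB) -(def_pblock tP CP cC) ebc.
Qed.

Lemma sorted_blocks (P : {set {set 'I_n}}) : trivIset P -> set0 \notin P ->
  sorted (relpre (@bmin n) ltn) (sort (fun B C => bmin B <= bmin C) (enum P)).
Proof.
move=> tP s0; rewrite -sorted_map ltn_sorted_uniq_leq sorted_map.
apply/andP; split; last by apply: sort_sorted => B C; apply: leq_total.
rewrite map_inj_in_uniq ?sort_uniq ?enum_uniq // => B C.
by rewrite !mem_sort !mem_enum; apply: bmin_inj.
Qed.

Lemma listing_setU1 (I : {set 'I_n}) (P : {set {set 'I_n}}) :
  trivIset (I |: P) -> set0 \notin I |: P -> I \notin P ->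
  (forall B, B \in P -> bmin I < bmin B) ->
  listing (I |: P) = sort (fun i j : 'I_n => i <= j) (enum I) ++ listing P.
Proof.
move=> tIP s0IP IP ltIP.
have tP : trivIset P by apply: trivIsetS tIP; apply: subsetUr.
have s0P : set0 \notin P by apply: contra s0IP; rewrite in_setU1 orbC => ->.
rewrite /listing.
suff -> : sort (fun B C => bmin B <= bmin C) (enum (I |: P))
        = I :: sort (fun B C => bmin B <= bmin C) (enum P) by [].
have lt_bmin_trans : transitive (relpre (@bmin n) ltn) by move=> ? ? ?; apply: ltn_trans.
apply: (irr_sorted_eq lt_bmin_trans (fun B => ltnn (bmin B))).
- exact: sorted_blocks.
- rewrite /= path_sortedE // sorted_blocks // andbT.
  by apply/allP => B; rewrite mem_sort mem_enum; apply: ltIP.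
- by move=> B; rewrite inE !mem_sort !mem_enum in_setU1.
Qed.

Lemma count_listing (P : {set {set 'I_n}}) (p : pred 'I_n) : trivIset P ->
  count p (listing P) = \sum_(y in cover P | p y) 1.
Proof.
move=> tP; rewrite big_trivIset_cond // /listing count_flatten -map_comp sumnE big_map.
rewrite (perm_big (enum P)) ?perm_sort // big_enum /=; apply: eq_bigr => B _.
by rewrite (permP (permEl (perm_sort _ _))) -sum1_count big_enum_cond.
Qed.

Definition ninv_split (A I : {set 'I_n}) : nat :=
  \sum_(a in I) \sum_(y in A :\: I | y < a) 1.

End Listing.

Local Open Scope ring_scope.

Section Expansion.
Variables (K : fieldType) (n m : nat).

Definition mpartition (k : nat) (A : {set 'I_n}) (P : {set {set 'I_n}}) : bool :=
  partition P A && [forall B in P, #|B| == m] && (#|P| == k).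

Lemma hpfE k (x : wedge K n m) A :
  hpf k x A = \sum_(P : {set {set 'I_n}} | mpartition k A P)
                psign K P * \prod_(B in P) coord_wedge x B.
Proof. by []. Qed.

Lemma mpartition_setU1 k (A I : {set 'I_n}) (a0 : 'I_n) (P : {set {set 'I_n}}) :
  I \subset A -> a0 \in I -> #|I| = m ->
  mpartition k.+1 A (I |: P) && (I \notin P) = mpartition k (A :\: I) P.
Proof.
move=> IA a0I cI; apply/idP/idP.
- case/andP => /andP [/andP [/and3P [/eqP cov tIP s0] /forall_inP bl] /eqP cP] IP.
  have tP : trivIset P by apply: trivIsetS tIP; apply: subsetUr.
  apply/andP; split; first (apply/andP; split).
  + apply/and3P; split => //.
    * by rewrite -{1}(setU1K IP) coverD1 ?cov ?setU11.
    * by apply: contra s0; rewrite in_setU1 orbC => ->.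
  + by apply/forall_inP => B BP; apply: bl; rewrite in_setU1 BP orbT.
  + by move: cP; rewrite cardsU1 IP add1n => -[->].
- case/andP => /andP [/and3P [/eqP cov tP s0] /forall_inP bl] /eqP cP.
  have dis : {in P, forall B : {set 'I_n}, [disjoint I & B]}.
    move=> B BP; rewrite -setI_eq0; apply/eqP/setP => y; rewrite !inE.
    apply/negbTE/negP => /andP [yI yB].
    have : y \in cover P by apply/bigcupP; exists B.
    by rewrite cov !inE yI.
  have [tIP IP] := trivIsetU1 dis tP s0.
  rewrite IP andbT; apply/andP; split; first (apply/andP; split).
  + apply/and3P; split => //.
    * rewrite /cover big_setU1 //= -/(cover P) cov; apply/eqP/setP => y.
      by rewrite !inE; case yI: (y \in I); rewrite //= (subsetP IA).
    * rewrite in_setU1 negb_or s0 andbT; apply: contraTneq a0I => <-.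
      by rewrite inE.
  + apply/forall_inP => B; rewrite in_setU1 => /orP [/eqP ->|BP]; first by rewrite cI.
    exact: bl.
  + by rewrite cardsU1 IP cP.
Qed.

Lemma hpf_split_block k (x : wedge K n m) (A : {set 'I_n}) (a0 : 'I_n) :
  a0 \in A ->
  hpf k.+1 x A = \sum_(I : {set 'I_n} | (I \subset A) && (a0 \in I) && (#|I| == m))
     \sum_(P : {set {set 'I_n}} | mpartition k (A :\: I) P)
        psign K (I |: P) * \prod_(B in I |: P) coord_wedge x B.
Proof.
move=> a0A; rewrite hpfE (partition_big (pblock^~ a0)
   (fun I => (I \subset A) && (a0 \in I) && (#|I| == m))) /=.
  apply: eq_bigr => I /andP [/andP [IA a0I] /eqP cI].
  rewrite (reindex_onto (fun P => I |: P) (fun P => P :\ I)) /=.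
    apply: eq_bigl => P; rewrite -(mpartition_setU1 k P IA a0I cI).
    apply/idP/idP.
    - by case/andP => /andP [-> _] /eqP <-; rewrite setD11.
    - case/andP => QP IP; rewrite QP /= setU1K // eqxx andbT.
      case/andP: QP => /andP [/and3P [_ tP _] _] _.
      by rewrite (def_pblock tP (setU11 _ _) a0I).
  move=> P /andP [QP /eqP <-]; apply/setD1K/pblock_mem.
  by case/andP: QP => /andP [/and3P [/eqP -> _ _] _] _.
move=> P /andP [/andP [/and3P [/eqP cov tP s0] /forall_inP bl] _].
have a0c : a0 \in cover P by rewrite cov.
have pbP := pblock_mem a0c.
rewrite mem_pblock a0c bl // !andbT -cov.
by apply/subsetP => y yB; apply/bigcupP; exists (pblock P a0).
Qed.

Lemma psign_setU1 k (A I : {set 'I_n}) (a0 : 'I_n) (P : {set {set 'I_n}}) :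
  (forall b, b \in A -> a0 <= b)%N -> I \subset A -> a0 \in I -> #|I| = m ->
  mpartition k (A :\: I) P ->
  psign K (I |: P) = (-1) ^+ ninv_split A I * psign K P.
Proof.
move=> a0min IA a0I cI QP.
have := QP; rewrite -(mpartition_setU1 k P IA a0I cI) => /andP [QIP IP].
case/andP: QIP => /andP [/and3P [_ tIP s0] _] _.
case/andP: QP => /andP [/and3P [/eqP cov tP _] _] _.
rewrite /psign listing_setU1 //; last first.
  move=> B BP; apply: leq_ltn_trans (bmin_le a0I) _.
  apply: leq_bmin; first exact: ltn_ord.
  move=> i iB; have : i \in cover P by apply/bigcupP; exists B.
  rewrite cov !inE => /andP [iI iA]; rewrite ltn_neqAle a0min // andbT.
  by apply: contraNneq iI => /val_inj <-.
rewrite ninv_cat ninv_sort_enum add0n exprD mulrC /ninv_split.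
under eq_bigr do rewrite count_listing // cov.
by rewrite (perm_big (enum I)) ?perm_sort // big_enum.
Qed.

Lemma hpf_expand k (x : wedge K n m) (A : {set 'I_n}) (a0 : 'I_n) :
  a0 \in A -> (forall b, b \in A -> a0 <= b)%N ->
  hpf k.+1 x A = \sum_(I : {set 'I_n} | (I \subset A) && (a0 \in I) && (#|I| == m))
     (-1) ^+ ninv_split A I * coord_wedge x I * hpf k x (A :\: I).
Proof.
move=> a0A a0min; rewrite (hpf_split_block k x a0A); apply: eq_bigr.
move=> I /andP [/andP [IA a0I] /eqP cI]; rewrite hpfE mulr_sumr; apply: eq_bigr.
move=> P QP; have := QP; rewrite -(mpartition_setU1 k P IA a0I cI) => /andP [_ IP].
by rewrite (psign_setU1 a0min IA a0I cI QP) big_setU1 //=; ring.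
Qed.

Lemma hpf1 (x : wedge K n m) (A : {set 'I_n}) :
  (0 < m)%N -> #|A| = m -> hpf 1 x A = coord_wedge x A.
Proof.
move=> m_gt0 cA; have A0 : A != set0 by rewrite -card_gt0 cA.
rewrite hpfE (big_pred1 [set A]); last first.
  move=> P; apply/idP/idP.
  - case/andP => /andP [/and3P [/eqP cov _ _] _] /cards1P [B eB].
    by move: cov; rewrite eB cover1 => ->; rewrite /= eqxx.
  - move/eqP => ->; rewrite /mpartition /partition cover1 eqxx trivIset1 in_set1.
    rewrite eq_sym A0 cards1 eqxx andbT /=.
    by apply/forall_inP => B; rewrite in_set1 => /eqP ->; rewrite cA.
by rewrite big_set1 /psign /listing enum_set1 /= cats0 ninv_sort_enum mul1r.
Qed.

Lemma HPf1_eq0 (x : wedge K n m) : (0 < m)%N -> HPf 1 x <-> x = 0.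
Proof.
move=> m_gt0; split => [x0|-> A]; last first.
  rewrite muln1 => cA; rewrite hpf1 // /coord_wedge.
  by case: insub => //= I; rewrite ffunE.
apply/ffunP => I; have cI : #|val I| = m by apply/eqP; apply: (valP I).
by have := x0 (val I); rewrite muln1 hpf1 // /coord_wedge valK ffunE; apply.
Qed.

Lemma HPf_succ l (x : wedge K n m) : (0 < m)%N -> HPf l x -> HPf l.+1 x.
Proof.
move=> m_gt0 xl A cA.
have [a0 a0A a0min] : {a0 | a0 \in A & forall b, b \in A -> (a0 <= b)%N}.
  have /set0Pn/sigW[b bA] : A != set0 by rewrite -card_gt0 cA muln_gt0 m_gt0.
  by case: (arg_minnP (fun i : 'I_n => nat_of_ord i) bA) => a0; exists a0.
rewrite (hpf_expand l x a0A a0min); apply: big1 => I /andP [/andP [IA _] /eqP cI].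
by rewrite xl ?mulr0 // cardsD (setIidPr IA) cA cI mulnS addKn.
Qed.

Lemma HPf_large L (x : wedge K n m) : (n < m * L)%N -> HPf L x.
Proof.
move=> nmL A cA; have := max_card A.
by rewrite card_ord cA leqNgt nmL.
Qed.

End Expansion.

Theorem proposition3p17 (K : fieldType) (n m : nat) :
  (2 <= m)%N -> ~~ odd m ->
  (forall x : wedge K n m, HPf 1 x <-> x = 0) /\
  (forall (l : nat) (x : wedge K n m), (1 <= l)%N -> HPf l x -> HPf l.+1 x) /\
  (exists L0 : nat, forall L : nat, (L0 <= L)%N -> forall x : wedge K n m, HPf L x).
Proof.
move=> m_ge2 _; have m_gt0 : (0 < m)%N by apply: leq_trans m_ge2.
split; [|split].
- by move=> x; apply: HPf1_eq0.
- by move=> l x _; apply: HPf_succ.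
- exists n.+1 => L nL x; apply: HPf_large.
  by rewrite (leq_trans nL) // leq_pmull.
Qed.
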